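(* Let $f$ and $g$ be balanced flows such that the product $fg$ is defined. Then $fg$ is balanced and $h(fg)\le\max\{h(f),h(g)\}$. Consequently the set $\mathcal B$ of balanced wirings is closed under products of wirings (and is a semiring).
   Context: Terms: first-order terms built from an infinite set of variables, a binary function symbol $\bullet$ written infix, infinitely many constant symbols including a distinguished constant $\star$, and for each $n\ge1$ at least one $n$-ary function symbol. $\mathrm{var}(t)$ is the set of variables of $t$. The height $h(t)$ is the maximal distance from the root to a node in the tree of $t$; the height of an occurrence of a variable in $t$ is its distance from the root. A renaming is a bijective substitution mapping variables to variables. A flow is a pair of terms written $t\leftarrow u$ with $\mathrm{var}(t)\subseteq\mathrm{var}(u)$, considered up to renaming. The product of flows $u\leftarrow v$ and $t\leftarrow w$ (representatives chosen with disjoint variable sets) is defined iff $v$ and $t$ are unifiable, and then equals $u\theta\leftarrow w\theta$ with $\theta$ a most general unifier of $v,t$. A wiring is a finite set of flows; product of wirings $FG=\{fg: f\in F,g\in G, fg\text{ defined}\}$, sum is union, $0$ is the empty wiring. A flow $t\leftarrow u$ is balanced if for every variable $x$, all occurrences of $x$ in $t$ and in $u$ have the same height; a wiring is balanced if all its flows are balanced; $\mathcal B$ is the set of balanced wirings. The height of a flow $t\leftarrow u$ is $\max\{h(t),h(u)\}$. A semiring is a set of wirings containing $0$ and closed under finite sums and products. *)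

From Stdlib Require Import List Arith.
Import ListNotations.
Set Implicit Arguments.

Section Terms.
(* F : the type of function symbols (arity = number of arguments). *)
Variable F : Type.

Inductive term : Type :=
| Var : nat -> term
| Fn : F -> list term -> term.

Inductive occ_at (x : nat) : nat -> term -> Prop :=
| occ_var : occ_at x 0 (Var x)
| occ_fn : forall (f : F) (args : list term) (a : term) (d : nat),
    In a args -> occ_at x d a -> occ_at x (S d) (Fn f args).

Definition occurs (x : nat) (t : term) : Prop := exists d, occ_at x d t.

Fixpoint height (t : term) : nat :=
  match t with
  | Var _ => 0
  | Fn _ args =>
      match args with
      | [] => 0
      | _ => S (list_max (map height args))
      end
  end.

Definition subst := nat -> term.

Fixpoint apply (s : subst) (t : term) : term :=
  match t with
  | Var x => s x
  | Fn f args => Fn f (map (apply s) args)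
  end.

Definition unifier (th : subst) (v t : term) : Prop := apply th v = apply th t.

Definition mgu (th : subst) (v t : term) : Prop :=
  unifier th v t /\
  forall sg : subst, unifier sg v t ->
    exists rho : subst, forall x, sg x = apply rho (th x).

Definition renaming (r : nat -> nat) : Prop :=
  exists r', (forall x, r' (r x) = x) /\ (forall x, r (r' x) = x).

Definition rename (r : nat -> nat) (t : term) : term := apply (fun x => Var (r x)) t.

(* a flow t <- u is represented by the pair (t, u) *)
Definition flow := (term * term)%type.

Definition is_flow (f : flow) : Prop :=
  forall x, occurs x (fst f) -> occurs x (snd f).

Definition flow_occurs (x : nat) (f : flow) : Prop :=
  occurs x (fst f) \/ occurs x (snd f).

Definition flow_equiv (f f' : flow) : Prop :=
  exists r, renaming r /\ fst f' = rename r (fst f) /\ snd f' = rename r (snd f).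

(* h is (a representative of) the product fg, which is then defined:
   (u <- v)(t <- w) = u th <- w th, with representatives having disjoint
   variables and th a most general unifier of v and t *)
Definition flow_prod (f g h : flow) : Prop :=
  exists (f' g' : flow) (th : subst),
    flow_equiv f f' /\ flow_equiv g g' /\
    (forall x, flow_occurs x f' -> ~ flow_occurs x g') /\
    mgu th (snd f') (fst g') /\
    flow_equiv (apply th (fst f'), apply th (snd g')) h.

Definition prod_defined (f g : flow) : Prop := exists h, flow_prod f g h.

Definition balanced (f : flow) : Prop :=
  forall x d d',
    (occ_at x d (fst f) \/ occ_at x d (snd f)) ->
    (occ_at x d' (fst f) \/ occ_at x d' (snd f)) -> d = d'.

Definition flow_height (f : flow) : nat := Nat.max (height (fst f)) (height (snd f)).

(* wirings: finite sets of flows (each up to renaming), as lists of representatives *)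
Definition wiring := list flow.

Definition is_wiring (W : wiring) : Prop := forall f, In f W -> is_flow f.

Definition balanced_wiring (W : wiring) : Prop := forall f, In f W -> balanced f.

(* H represents the product FG = { fg | f in F, g in G, fg defined } *)
Definition wiring_prod (W1 W2 H : wiring) : Prop :=
  (forall h, In h H -> exists f g, In f W1 /\ In g W2 /\ flow_prod f g h) /\
  (forall f g, In f W1 -> In g W2 -> prod_defined f g ->
     exists h, In h H /\ flow_prod f g h).

Definition wiring_sum (W1 W2 H : wiring) : Prop :=
  forall f, (exists f', In f' H /\ flow_equiv f f') <->
            (exists f', (In f' W1 \/ In f' W2) /\ flow_equiv f f').

End Terms.

From Stdlib Require Import List Arith Lia Cantor ClassicalEpsilon.
Import ListNotations.

(* Write f = u <- v and g = t <- w with disjoint variables and theta a most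
   general unifier of v and t.  Balance and disjointness give every variable x
   of u, v, t, w a well-defined depth D x.  Two further unifiers of v and t are
   built from theta: one renames each variable a occurring at depth d in
   theta x to the pair <a, D x + d>, the other truncates theta x at height
   M - D x, where M is the larger of the two flow heights.  Both factor through
   theta.  The first factorisation shows that the depth of a variable in
   theta x, shifted by D x, depends only on the variable, so u theta <- w theta
   is balanced; the second shows D x + h(theta x) <= M, which bounds the height
   of u theta and w theta by M. *)

Section BalancedFlows.
Variable F : Type.
Notation term := (term F).

Fixpoint term_nested_ind (P : term -> Prop) (HVar : forall x, P (Var F x))
    (HFn : forall f args, Forall P args -> P (Fn f args)) (t : term) : P t :=
  match t with
  | Var _ x => HVar x
  | Fn f args => HFn f args
      ((fix go l := match l return Forall P l with
                    | [] => Forall_nil _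
                    | a :: l => Forall_cons _ (term_nested_ind P HVar HFn a) (go l)
                    end) args)
  end.

Lemma occ_at_apply (s : subst F) t a d : occ_at a d (apply s t) ->
  exists x d1 d2, occ_at x d1 t /\ occ_at a d2 (s x) /\ d = d1 + d2.
Proof.
  revert a d; induction t as [x|f args IH] using term_nested_ind; intros a d Hocc.
  - exists x, 0, d. repeat split; [constructor | exact Hocc].
  - inversion Hocc as [|? ? b ? Hb Hocc_b]; subst.
    apply in_map_iff in Hb as [c [<- Hc]].
    rewrite Forall_forall in IH.
    destruct (IH c Hc a _ Hocc_b) as (x & d1 & d2 & Hx & Ha & ->).
    exists x, (S d1), d2. repeat split; [econstructor; eauto | exact Ha].
Qed.

Lemma apply_occ_at (s : subst F) {x d1 t} : occ_at x d1 t ->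
  forall {a d2}, occ_at a d2 (s x) -> occ_at a (d1 + d2) (apply s t).
Proof.
  induction 1; intros; simpl; [assumption|].
  econstructor; [apply in_map|]; eauto.
Qed.

Lemma height_arg (f : F) {args a} : In a args -> S (height a) <= height (Fn f args).
Proof.
  intro Ha. destruct args as [|b l]; [destruct Ha|].
  cbn [height]. apply le_n_S.
  assert (Hall := proj1 (list_max_le (map (@height F) (b :: l)) _) (le_n _)).
  rewrite Forall_forall in Hall. apply Hall, in_map, Ha.
Qed.

Lemma height_Fn_le (f : F) args M :
  (forall a, In a args -> S (height a) <= M) -> height (Fn f args) <= M.
Proof.
  intro Hargs. destruct args as [|b l]; [simpl; lia|].
  assert (Hb := Hargs b (or_introl eq_refl)).
  assert (list_max (map (@height F) (b :: l)) <= M - 1); [|cbn [height]; lia].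
  apply list_max_le, Forall_forall. intros n Hn.
  apply in_map_iff in Hn as [c [<- Hc]]. specialize (Hargs c Hc). lia.
Qed.

Lemma apply_Var_id (t : term) : apply (Var F) t = t.
Proof.
  induction t as [x|f args IH] using term_nested_ind; [reflexivity|].
  simpl. f_equal. rewrite Forall_forall in IH.
  rewrite (map_ext_in _ (fun t => t) _ IH). apply map_id.
Qed.

Lemma height_rename r (t : term) : height (rename r t) = height t.
Proof.
  unfold rename. induction t as [x|f args IH] using term_nested_ind; [reflexivity|].
  simpl. rewrite map_map. rewrite Forall_forall in IH.
  rewrite (map_ext_in _ (@height F) args IH). destruct args; reflexivity.
Qed.

Lemma occ_at_rename r a d (t : term) :
  occ_at a d (rename r t) -> exists x, occ_at x d t /\ a = r x.
Proof.
  intro Hocc. apply occ_at_apply in Hocc as (x & d1 & d2 & Hx & Ha & ->).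
  inversion Ha; subst. exists x. rewrite Nat.add_0_r. auto.
Qed.

Lemma rename_occ_at r x d (t : term) : occ_at x d t -> occ_at (r x) d (rename r t).
Proof.
  intro Hx. rewrite <- (Nat.add_0_r d).
  exact (apply_occ_at _ Hx (occ_var _ (r x))).
Qed.

Lemma balanced_flow_equiv {p q : flow F} : flow_equiv p q -> balanced p -> balanced q.
Proof.
  intros (r & [r' [Hr'r _]] & E1 & E2) Bp x d d' Hd Hd'.
  destruct p as [p1 p2], q as [q1 q2]; simpl in *; subst.
  assert (Hback : forall e, occ_at x e (rename r p1) \/ occ_at x e (rename r p2) ->
                   occ_at (r' x) e p1 \/ occ_at (r' x) e p2).
  { intros e [He|He]; apply occ_at_rename in He as [y [Hy ->]]; rewrite Hr'r; auto. }
  exact (Bp (r' x) d d' (Hback _ Hd) (Hback _ Hd')).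
Qed.

Lemma balanced_flow_equiv_inv {p q : flow F} : flow_equiv p q -> balanced q -> balanced p.
Proof.
  intros (r & _ & E1 & E2) Bq x d d' Hd Hd'.
  destruct p as [p1 p2], q as [q1 q2]; simpl in *; subst.
  apply (Bq (r x)); [destruct Hd as [Ho|Ho] | destruct Hd' as [Ho|Ho]];
    apply rename_occ_at with (r := r) in Ho; auto.
Qed.

Lemma flow_height_equiv {p q : flow F} : flow_equiv p q -> flow_height q = flow_height p.
Proof.
  intros (r & _ & E1 & E2). unfold flow_height. rewrite E1, E2, !height_rename. reflexivity.
Qed.

Lemma flow_equiv_refl (p : flow F) : flow_equiv p p.
Proof.
  exists (fun x => x). split; [exists (fun x => x); auto|].
  unfold rename. rewrite !apply_Var_id. destruct p; auto.
Qed.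

(* [at_depth D k t]: t sits at depth k inside an ambient term in which every
   variable x occurs only at depth D x. *)
Definition at_depth (D : nat -> nat) (k : nat) (t : term) : Prop :=
  forall x d, occ_at x d t -> D x = k + d.

Lemma at_depth_arg {D k} {f : F} {args a} :
  at_depth D k (Fn f args) -> In a args -> at_depth D (S k) a.
Proof.
  intros HD Ha x d Hx. rewrite (HD x (S d)); [lia | econstructor; eauto].
Qed.

Lemma at_depth_balanced {D} {p q : term} : at_depth D 0 p -> at_depth D 0 q -> balanced (p, q).
Proof.
  intros Dp Dq x d d' Hd Hd'. simpl in *.
  destruct Hd as [Hd|Hd], Hd' as [Hd'|Hd'];
    first [apply Dp in Hd | apply Dq in Hd]; first [apply Dp in Hd' | apply Dq in Hd']; lia.
Qed.

Lemma partial_function_choice (P : nat -> nat -> Prop) :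
  (forall x d d', P x d -> P x d' -> d = d') -> exists D, forall x d, P x d -> D x = d.
Proof.
  intro Hfun. exists (fun x => epsilon (inhabits 0) (P x)).
  intros x d Hd. apply (Hfun x); [apply epsilon_spec; eauto | exact Hd].
Qed.

Lemma disjoint_balanced_at_depth {u v t w : term} :
  balanced (u, v) -> balanced (t, w) ->
  (forall x, flow_occurs x (u, v) -> ~ flow_occurs x (t, w)) ->
  exists D, at_depth D 0 u /\ at_depth D 0 v /\ at_depth D 0 t /\ at_depth D 0 w.
Proof.
  intros Buv Btw Disj.
  destruct (partial_function_choice
              (fun x d => (occ_at x d u \/ occ_at x d v) \/ (occ_at x d t \/ occ_at x d w)))
    as [D HD].
  - intros x d d' [Hd|Hd] [Hd'|Hd']; [exact (Buv x d d' Hd Hd') | | | exact (Btw x d d' Hd Hd')];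
      exfalso; apply (Disj x);
      unfold flow_occurs, occurs; simpl; destruct Hd as [Ho|Ho], Hd' as [Ho'|Ho']; eauto.
  - exists D. repeat split; intros x d Hd; apply HD; tauto.
Qed.

Lemma at_depth_apply {th : subst F} {D D' k s} :
  (forall x a d, occ_at a d (th x) -> D' a = D x + d) ->
  at_depth D k s -> at_depth D' k (apply th s).
Proof.
  intros Hth Ds a d Ha. apply occ_at_apply in Ha as (x & d1 & d2 & Hx & Ha & ->).
  rewrite (Hth x a d2 Ha), (Ds x d1 Hx). lia.
Qed.

Lemma height_apply_le (th : subst F) {D} M {s} : forall {k},
  at_depth D k s -> k + height s <= M ->
  (forall x, D x <= M -> D x + height (th x) <= M) ->
  k + height (apply th s) <= M.
Proof.
  induction s as [x|f args IH] using term_nested_ind; intros k Ds Hs Hth.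
  - specialize (Ds x 0 (occ_var _ x)). simpl in *. specialize (Hth x). lia.
  - enough (height (Fn f (map (apply th) args)) <= M - k) by (simpl apply; lia).
    apply height_Fn_le. intros b Hb. apply in_map_iff in Hb as [a [<- Ha]].
    rewrite Forall_forall in IH.
    enough (S k + height (apply th a) <= M) by lia.
    apply IH; auto.
    + exact (at_depth_arg Ds Ha).
    + pose proof (height_arg f Ha). lia.
Qed.

(* Variable a at depth d in [tag k t] becomes the code of (a, k + d). *)
Fixpoint tag (k : nat) (t : term) : term :=
  match t with
  | Var _ a => Var F (Cantor.to_nat (a, k))
  | Fn f args => Fn f (map (tag (S k)) args)
  end.

Lemma tag_apply (th : subst F) {D v} : forall {k},
  at_depth D k v -> tag k (apply th v) = apply (fun x => tag (D x) (th x)) v.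
Proof.
  induction v as [x|f args IH] using term_nested_ind; intros k Dv.
  - simpl. rewrite (Dv x 0 (occ_var _ x)), Nat.add_0_r. reflexivity.
  - simpl. f_equal. rewrite map_map. apply map_ext_in. intros a Ha.
    rewrite Forall_forall in IH. exact (IH a Ha _ (at_depth_arg Dv Ha)).
Qed.

Lemma tag_instance_Var {rho : subst F} {a d t} : occ_at a d t ->
  forall {k}, tag k t = apply rho t -> rho a = Var F (Cantor.to_nat (a, k + d)).
Proof.
  induction 1 as [|f args b d Hb Hocc IH]; intros k E.
  - rewrite Nat.add_0_r. auto.
  - simpl in E. injection E as E. apply map_ext_in_iff with (a := b) in E; [|exact Hb].
    rewrite (IH _ E), Nat.add_succ_r. reflexivity.
Qed.

(* Compound subterms below height n are collapsed to a variable, so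
   [truncate n t] can be an instance of t only if h(t) <= n. *)
Fixpoint truncate (n : nat) (t : term) : term :=
  match n, t with
  | _, Var _ a => Var F a
  | 0, Fn f [] => Fn f []
  | 0, Fn _ (_ :: _) => Var F 0
  | S n, Fn f args => Fn f (map (truncate n) args)
  end.

Lemma truncate_apply (th : subst F) {D} M {v} : forall {k},
  at_depth D k v -> k + height v <= M ->
  truncate (M - k) (apply th v) = apply (fun x => truncate (M - D x) (th x)) v.
Proof.
  induction v as [x|f args IH] using term_nested_ind; intros k Dv Hv.
  - simpl. rewrite (Dv x 0 (occ_var _ x)), Nat.add_0_r. reflexivity.
  - destruct args as [|b l]; [destruct (M - k); reflexivity|].
    pose proof (height_arg f (or_introl (eq_refl b) : In b (b :: l))).
    destruct (M - k) as [|n] eqn:En; [lia|].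
    cbn [apply truncate]. f_equal. rewrite map_map. apply map_ext_in. intros a Ha.
    rewrite Forall_forall in IH. replace n with (M - S k) by lia.
    apply IH; [exact Ha | exact (at_depth_arg Dv Ha) |].
    pose proof (height_arg f Ha). lia.
Qed.

Lemma truncate_instance_height n : forall (t : term) (rho : subst F),
  truncate n t = apply rho t -> height t <= n.
Proof.
  induction n as [|n IH]; intros t rho E.
  - destruct t as [a|f [|b l]]; simpl; try lia. discriminate E.
  - destruct t as [a|f args]; [simpl; lia|].
    simpl in E. injection E as E.
    apply height_Fn_le. intros a Ha.
    apply map_ext_in_iff with (a := a) in E; [|exact Ha].
    apply IH in E. lia.
Qed.

Section MostGeneralUnifier.
Context {th : subst F} {v t : term} {D : nat -> nat}.
Hypotheses (Hmgu : mgu th v t) (Dv : at_depth D 0 v) (Dt : at_depth D 0 t).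

Lemma mgu_at_depth : exists D', forall x a d, occ_at a d (th x) -> D' a = D x + d.
Proof.
  destruct (proj2 Hmgu (fun x => tag (D x) (th x))) as [rho Hrho].
  { unfold unifier. rewrite <- (tag_apply th Dv), <- (tag_apply th Dt).
    f_equal. exact (proj1 Hmgu). }
  exists (fun a => match rho a with Var _ n => snd (Cantor.of_nat n) | Fn _ _ => 0 end).
  intros x a d Ha. rewrite (tag_instance_Var Ha (Hrho x)), Cantor.cancel_of_to.
  reflexivity.
Qed.

Lemma mgu_height M : height v <= M -> height t <= M ->
  forall x, D x <= M -> D x + height (th x) <= M.
Proof.
  intros Hv Ht.
  destruct (proj2 Hmgu (fun x => truncate (M - D x) (th x))) as [rho Hrho].
  { unfold unifier.
    rewrite <- (truncate_apply th M Dv), <- (truncate_apply th M Dt) by (simpl; lia).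
    f_equal. exact (proj1 Hmgu). }
  intros x Hx. pose proof (truncate_instance_height _ _ _ (Hrho x)). lia.
Qed.

End MostGeneralUnifier.

Lemma balanced_flow_prod {f g h : flow F} : balanced f -> balanced g -> flow_prod f g h ->
  balanced h /\ flow_height h <= Nat.max (flow_height f) (flow_height g).
Proof.
  intros Bf Bg (f' & g' & th & Ef & Eg & Disj & Hmgu & Eh).
  apply (balanced_flow_equiv Ef) in Bf. apply (balanced_flow_equiv Eg) in Bg.
  rewrite <- (flow_height_equiv Ef), <- (flow_height_equiv Eg), (flow_height_equiv Eh).
  destruct f' as [u v], g' as [t w]. unfold flow_height. simpl in *.
  destruct (disjoint_balanced_at_depth Bf Bg Disj) as (D & Du & Dv & Dt & Dw).
  split.
  - destruct (mgu_at_depth Hmgu Dv Dt) as [D' HD'].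
    apply (balanced_flow_equiv Eh), (at_depth_balanced (D := D'));
      apply (at_depth_apply HD'); assumption.
  - set (M := Nat.max (Nat.max (height u) (height v)) (Nat.max (height t) (height w))).
    assert (Hth := mgu_height Hmgu Dv Dt M ltac:(lia) ltac:(lia)).
    pose proof (height_apply_le th M Du ltac:(simpl; lia) Hth).
    pose proof (height_apply_le th M Dw ltac:(simpl; lia) Hth).
    simpl in *. lia.
Qed.

Lemma balanced_wiring_prod (W1 W2 H : wiring F) :
  balanced_wiring W1 -> balanced_wiring W2 -> wiring_prod W1 W2 H -> balanced_wiring H.
Proof.
  intros B1 B2 [Hprod _] h Hh.
  destruct (Hprod h Hh) as (f & g & Hf & Hg & Hfg).
  exact (proj1 (balanced_flow_prod (B1 f Hf) (B2 g Hg) Hfg)).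
Qed.

Lemma balanced_wiring_sum (W1 W2 H : wiring F) :
  balanced_wiring W1 -> balanced_wiring W2 -> wiring_sum W1 W2 H -> balanced_wiring H.
Proof.
  intros B1 B2 Hsum h Hh.
  destruct (proj1 (Hsum h)) as (f & Hf & Ehf); [exists h; split; auto using flow_equiv_refl|].
  apply (balanced_flow_equiv_inv Ehf). destruct Hf; auto.
Qed.

End BalancedFlows.

Theorem mainTheorem4 (F : Type) :
  (forall f g h : flow F,
      is_flow f -> is_flow g -> balanced f -> balanced g ->
      flow_prod f g h ->
      balanced h /\ flow_height h <= Nat.max (flow_height f) (flow_height g)) /\
  (forall W1 W2 H : wiring F,
      is_wiring W1 -> is_wiring W2 ->
      balanced_wiring W1 -> balanced_wiring W2 ->
      wiring_prod W1 W2 H -> balanced_wiring H) /\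
  balanced_wiring (@nil (flow F)) /\
  (forall W1 W2 H : wiring F,
      balanced_wiring W1 -> balanced_wiring W2 ->
      wiring_sum W1 W2 H -> balanced_wiring H).
Proof.
  split; [|split; [|split]].
  - intros f g h _ _. apply balanced_flow_prod.
  - intros W1 W2 H _ _. apply balanced_wiring_prod.
  - intros f [].
  - apply balanced_wiring_sum.
Qed.
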